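(* Let $\phi$ be an instance of MonLinNAE3SAT, and let $\mathcal{G}$ be the lifetime-1 temporal graph constructed from $\phi$, with sources $s$ and $s'$. If $\mathcal{G}$ admits a solution of \textsc{ReachFast} with sources $\{s,s'\}$ of value at most $6$, then $\phi$ has a not-all-equal satisfying assignment.
   Context: MonLinNAE3SAT instance: a CNF formula $\phi$ on variables $x_1,\dots,x_n$ with clauses $c_1,\dots,c_m$. Every clause has exactly three distinct literals, every variable appears exactly four times, there are no negations, and any two clauses share at most one variable. A not-all-equal satisfying assignment makes, in every clause, at least one literal true and at least one literal false. Construction of $\mathcal{G}$. All edges have the single label $1$. The vertices and edges are as follows. - Sources $s,s'$. - For each clause $c_j$: vertices $a_j,a'_j,z_j,z'_j$ and edges $sa_j$, $s'a'_j$, $a_jz_j$, $a'_jz'_j$. - For each variable $x_i$: vertices $b_i,b'_i,w_i$ and edges $b_iw_i$, $w_ib'_i$. - If $x_i$ appears in $c_j$: edges $a_jb_i$ and $a'_jb'_i$. - If $x_i$ and $x_k$ appear in a common clause: edges $b_ib_k$, $b'_ib'_k$, $w_iw_k$. - A ladder on vertices $p_1,\dots,p_5,q_1,\dots,q_5$ with edges $sp_1$, $sq_1$, $s'p_5$, $s'q_5$, $p_ip_{i+1}$ and $q_iq_{i+1}$ for $i\in[4]$, and $p_iq_i$ for $i\in[5]$. Temporal graph notions. A temporal graph has edge sets $E_1,\dots,E_{t_{\max}}$, and an edge has label $i$ if it lies in $E_i$. A temporal path uses edges with strictly increasing labels; its arrival time is its last label. $\mathrm{reachtime}(v,\cdot)$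 is the least $t$ such that $v$ reaches every vertex by time $t$. Delaying a label $i$ by a positive integer $\delta$ replaces it by $i+\delta$. A solution for sources $S$ is a temporal graph obtained by delaying labels in which every source reaches every vertex; its value is $\max_{v\in S}\mathrm{reachtime}(v,\cdot)$. *)

From mathcomp Require Import all_boot all_order.
Set Implicit Arguments. Unset Strict Implicit. Unset Printing Implicit Defensive.

(* An instance with n variables x_0..x_{n-1} and m clauses c_0..c_{m-1};
   [cl j p] is the variable occupying position p (of 3) in clause j.
   No negations: every literal is a positive variable. *)
Definition occurs (n m : nat) (cl : 'I_m -> 'I_3 -> 'I_n) (i : 'I_n) (j : 'I_m) : bool :=
  [exists p : 'I_3, cl j p == i].

Definition MonLinNAE3SAT (n m : nat) (cl : 'I_m -> 'I_3 -> 'I_n) : Prop :=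
  (forall j : 'I_m, injective (cl j)) /\
  (forall i : 'I_n, #|[set jp : 'I_m * 'I_3 | cl jp.1 jp.2 == i]| = 4) /\
  (forall j j' : 'I_m, j != j' ->
     #|[set i : 'I_n | occurs cl i j && occurs cl i j']| <= 1).

Definition NAE_sat (n m : nat) (cl : 'I_m -> 'I_3 -> 'I_n) (a : 'I_n -> bool) : Prop :=
  forall j : 'I_m, (exists p : 'I_3, a (cl j p)) /\ (exists p : 'I_3, ~~ a (cl j p)).

(* Ladder vertices p_1..p_5, q_1..q_5 are vp k, vq k with k : 'I_5 (k = index-1). *)
Inductive vert (n m : nat) : Type :=
| vs | vs'
| va of 'I_m | va' of 'I_m | vz of 'I_m | vz' of 'I_m
| vb of 'I_n | vb' of 'I_n | vw of 'I_n
| vp of 'I_5 | vq of 'I_5.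
Arguments vs {n m}. Arguments vs' {n m}.
Arguments va {n m}. Arguments va' {n m}. Arguments vz {n m}. Arguments vz' {n m}.
Arguments vb {n m}. Arguments vb' {n m}. Arguments vw {n m}. Arguments vp {n m}. Arguments vq {n m}.

Definition cooccur (n m : nat) (cl : 'I_m -> 'I_3 -> 'I_n) (i k : 'I_n) : Prop :=
  i <> k /\ exists j : 'I_m, occurs cl i j /\ occurs cl k j.

Inductive base_edge (n m : nat) (cl : 'I_m -> 'I_3 -> 'I_n) : vert n m -> vert n m -> Prop :=
| e_sa j : base_edge cl vs (va j)
| e_sa' j : base_edge cl vs' (va' j)
| e_az j : base_edge cl (va j) (vz j)
| e_az' j : base_edge cl (va' j) (vz' j)
| e_bw i : base_edge cl (vb i) (vw i)
| e_wb' i : base_edge cl (vw i) (vb' i)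
| e_ab j i : occurs cl i j -> base_edge cl (va j) (vb i)
| e_ab' j i : occurs cl i j -> base_edge cl (va' j) (vb' i)
| e_bb i k : cooccur cl i k -> base_edge cl (vb i) (vb k)
| e_bb' i k : cooccur cl i k -> base_edge cl (vb' i) (vb' k)
| e_ww i k : cooccur cl i k -> base_edge cl (vw i) (vw k)
| e_sp k : nat_of_ord k = 0 -> base_edge cl vs (vp k)
| e_sq k : nat_of_ord k = 0 -> base_edge cl vs (vq k)
| e_s'p k : nat_of_ord k = 4 -> base_edge cl vs' (vp k)
| e_s'q k : nat_of_ord k = 4 -> base_edge cl vs' (vq k)
| e_pp k k' : (nat_of_ord k).+1 = nat_of_ord k' -> base_edge cl (vp k) (vp k')
| e_qq k k' : (nat_of_ord k).+1 = nat_of_ord k' -> base_edge cl (vq k) (vq k')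
| e_pq k k' : nat_of_ord k = nat_of_ord k' -> base_edge cl (vp k) (vq k').

Definition gedge (n m : nat) (cl : 'I_m -> 'I_3 -> 'I_n) (u v : vert n m) : Prop :=
  base_edge cl u v \/ base_edge cl v u.

(* It is obtained from G (all labels 1) by delaying: each edge keeps a single
   label, which is 1 or 1 + delta with delta a positive integer. *)
Definition delayed_labelling (n m : nat) (cl : 'I_m -> 'I_3 -> 'I_n)
  (lam : vert n m -> vert n m -> nat) : Prop :=
  forall u v, gedge cl u v -> lam u v = lam v u /\ 1 <= lam u v.

Inductive tpath (n m : nat) (cl : 'I_m -> 'I_3 -> 'I_n) (lam : vert n m -> vert n m -> nat)
  : vert n m -> vert n m -> nat -> Prop :=
| tp_one x y : gedge cl x y -> tpath cl lam x y (lam x y)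
| tp_step x y z t : tpath cl lam x y t -> gedge cl y z -> t < lam y z ->
                    tpath cl lam x z (lam y z).

Definition reaches_by (n m : nat) (cl : 'I_m -> 'I_3 -> 'I_n) (lam : vert n m -> vert n m -> nat)
  (x y : vert n m) (t : nat) : Prop :=
  x = y \/ exists t', tpath cl lam x y t' /\ t' <= t.

Definition reachtime_le (n m : nat) (cl : 'I_m -> 'I_3 -> 'I_n) (lam : vert n m -> vert n m -> nat)
  (x : vert n m) (t : nat) : Prop :=
  forall y : vert n m, reaches_by cl lam x y t.

Definition reachfast_solution_le (n m : nat) (cl : 'I_m -> 'I_3 -> 'I_n)
  (lam : vert n m -> vert n m -> nat) (t : nat) : Prop :=
  delayed_labelling cl lam /\ reachtime_le cl lam vs t /\ reachtime_le cl lam vs' t.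

From mathcomp Require Import all_boot all_order.
From mathcomp Require Import zify.

Set Implicit Arguments. Unset Strict Implicit. Unset Printing Implicit Defensive.

(* In G the vertex z_j is at distance 6 from s' and z'_j is at distance 6 from
   s. Since labels are positive and strictly increasing along a temporal path,
   its arrival time is at least its length, so a path reaching z_j (resp. z'_j)
   by time 6 is a shortest path whose k-th edge has label exactly k. Walking it
   backwards, the path from s' enters z_j through s' .. w_i b_i a_j z_j with x_i
   in c_j, forcing label 4 on b_i w_i; the path from s enters z'_j through
   .. b_i w_i b'_i a'_j z'_j with x_i in c_j, forcing label 3 on b_i w_i.
   Hence "x_i is true iff b_i w_i has label 4" is a not-all-equal assignment. *)

Section TemporalPotential.
Variables (n m : nat) (cl : 'I_m -> 'I_3 -> 'I_n) (lam : vert n m -> vert n m -> nat).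
Hypothesis lam_gt0 : forall u v, gedge cl u v -> 0 < lam u v.
Variable f : vert n m -> nat.
Hypothesis f_lipschitz : forall u v, gedge cl u v -> f v <= (f u).+1.

Lemma tpath_potential_le x y t : tpath cl lam x y t -> f y <= f x + t.
Proof.
elim=> [u v uv | u v w t' _ IH vw lt_t'].
  by have := lam_gt0 uv; have := f_lipschitz uv; lia.
by have := f_lipschitz vw; lia.
Qed.

Lemma reaches_by_tight x y t :
  f x = 0 -> f y = t -> 0 < t -> reaches_by cl lam x y t -> tpath cl lam x y t.
Proof.
move=> fx fy t_gt0 [exy | [t' [p le_t't]]]; first by move: fy; rewrite -exy; lia.
have := tpath_potential_le p; rewrite fx fy => ge_t't.
by have -> : t = t' by lia.
Qed.

Lemma tight_tpath_pred x z t : f x = 0 -> tpath cl lam x z t -> f z = t -> 1 < t ->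
  exists y, [/\ gedge cl y z, f y = t.-1, tpath cl lam x y (f y) & lam y z = t].
Proof.
move=> + p; case: p => [u v uv | u y v t' p yv lt_t'] fx fv t_gt1.
  by have := f_lipschitz uv; rewrite fx; lia.
have := tpath_potential_le p; have := f_lipschitz yv; rewrite fx => le_fv le_fy.
have fyE : f y = t' by lia.
by exists y; split=> //; [lia | rewrite fyE].
Qed.

End TemporalPotential.

Section Construction.
Variables (n m : nat) (cl : 'I_m -> 'I_3 -> 'I_n).

(* Distances from s and from s' in G; only their 1-Lipschitz property is used. *)
Definition dist_s (v : vert n m) : nat :=
  match v with
  | vs => 0 | vs' => 6 | va _ => 1 | va' _ => 5 | vz _ => 2 | vz' _ => 6
  | vb _ => 2 | vb' _ => 4 | vw _ => 3 | vp k => k.+1 | vq k => k.+1 end.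

Definition dist_s' (v : vert n m) : nat :=
  match v with
  | vs => 6 | vs' => 0 | va _ => 5 | va' _ => 1 | vz _ => 6 | vz' _ => 2
  | vb _ => 4 | vb' _ => 2 | vw _ => 3 | vp k => 5 - k | vq k => 5 - k end.

Lemma base_edge_dist_lipschitz u v : base_edge cl u v ->
  [/\ dist_s v <= (dist_s u).+1, dist_s u <= (dist_s v).+1,
      dist_s' v <= (dist_s' u).+1 & dist_s' u <= (dist_s' v).+1].
Proof. by case=> //= *; split; lia. Qed.

Lemma dist_s_lipschitz u v : gedge cl u v -> dist_s v <= (dist_s u).+1.
Proof. by case=> /base_edge_dist_lipschitz []. Qed.

Lemma dist_s'_lipschitz u v : gedge cl u v -> dist_s' v <= (dist_s' u).+1.
Proof. by case=> /base_edge_dist_lipschitz []. Qed.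

Lemma gedge_to_vz y j : gedge cl y (vz j) -> y = va j.
Proof. by case=> e; inversion e. Qed.

Lemma gedge_to_vz' y j : gedge cl y (vz' j) -> y = va' j.
Proof. by case=> e; inversion e. Qed.

Lemma gedge_to_va y j : gedge cl y (va j) -> dist_s' y = 4 ->
  exists2 i, y = vb i & occurs cl i j.
Proof. by case=> e; inversion e; subst=> // _; exists i. Qed.

Lemma gedge_to_va' y j : gedge cl y (va' j) -> dist_s y = 4 ->
  exists2 i, y = vb' i & occurs cl i j.
Proof. by case=> e; inversion e; subst=> // _; exists i. Qed.

Lemma gedge_to_vb y i : gedge cl y (vb i) -> dist_s' y = 3 -> y = vw i.
Proof. by case=> e; inversion e; subst. Qed.

Lemma gedge_to_vb' y i : gedge cl y (vb' i) -> dist_s y = 3 -> y = vw i.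
Proof. by case=> e; inversion e; subst. Qed.

Lemma gedge_to_vw y i : gedge cl y (vw i) -> dist_s y = 2 -> y = vb i.
Proof. by case=> e; inversion e; subst. Qed.

Variable lam : vert n m -> vert n m -> nat.
Hypothesis lam_gt0 : forall u v, gedge cl u v -> 0 < lam u v.

Lemma tpath_s'_vz6_label4 j : tpath cl lam vs' (vz j) 6 ->
  exists2 i, occurs cl i j & lam (vw i) (vb i) = 4.
Proof.
have pred := tight_tpath_pred lam_gt0 (@dist_s'_lipschitz) (x := vs') erefl.
move=> /pred /(_ erefl isT) [_ [/gedge_to_vz -> _ p5 _]].
have [y [ya y4 p4 _]] := pred _ _ p5 erefl isT.
have [i ey occ] := gedge_to_va ya y4; subst y.
have [w [wb w3 _ lab]] := pred _ _ p4 erefl isT.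
by rewrite (gedge_to_vb wb w3) in lab; exists i.
Qed.

Lemma tpath_s_vz'6_label3 j : tpath cl lam vs (vz' j) 6 ->
  exists2 i, occurs cl i j & lam (vb i) (vw i) = 3.
Proof.
have pred := tight_tpath_pred lam_gt0 (@dist_s_lipschitz) (x := vs) erefl.
move=> /pred /(_ erefl isT) [_ [/gedge_to_vz' -> _ p5 _]].
have [y [ya y4 p4 _]] := pred _ _ p5 erefl isT.
have [i ey occ] := gedge_to_va' ya y4; subst y.
have [w [wb w3 p3 _]] := pred _ _ p4 erefl isT.
rewrite (gedge_to_vb' wb w3) in p3.
have [b [bw b2 _ lab]] := pred _ _ p3 erefl isT.
by rewrite (gedge_to_vw bw b2) in lab; exists i.
Qed.

End Construction.

Theorem lemma2 (n m : nat) (cl : 'I_m -> 'I_3 -> 'I_n) :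
  MonLinNAE3SAT cl ->
  (exists lam : vert n m -> vert n m -> nat, reachfast_solution_le cl lam 6) ->
  exists a : 'I_n -> bool, NAE_sat cl a.
Proof.
move=> _ [lam [lam_ok [reach_s reach_s']]].
have lam_gt0 u v : gedge cl u v -> 0 < lam u v by case/lam_ok.
exists (fun i => lam (vb i) (vw i) == 4) => j; split.
- have p : tpath cl lam vs' (vz j) 6 := reaches_by_tight lam_gt0
    (@dist_s'_lipschitz n m cl) (x := vs') (y := vz j) erefl erefl isT (reach_s' _).
  have [i /existsP [k /eqP ki] lab4] := tpath_s'_vz6_label4 lam_gt0 p.
  have wb : gedge cl (vw i) (vb i) by right; constructor.
  by exists k; rewrite ki -(lam_ok _ _ wb).1 lab4.
- have p : tpath cl lam vs (vz' j) 6 := reaches_by_tight lam_gt0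
    (@dist_s_lipschitz n m cl) (x := vs) (y := vz' j) erefl erefl isT (reach_s _).
  have [i /existsP [k /eqP ki] lab3] := tpath_s_vz'6_label3 lam_gt0 p.
  by exists k; rewrite ki lab3.
Qed.
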